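(* Let $h>0$, $\lambda\in[0,1)$, let $\mu\in\mathcal{M}^+(h,\lambda)$, and let $g:\mathbb{R}\to[0,\infty)$ be non-decreasing with $g(0)=0$. Then $\int g^2\,d\mu\le\left(\frac{2}{1-\lambda}\right)^2\int (g(x)-g(x-h))^2\,d\mu(x).$
   Context: $\mathcal{M}^+(h,\lambda)$ denotes the class of Borel probability measures $\mu$ supported on $[0,\infty)$ such that $\mu([x+h,\infty))\le\lambda\,\mu([x,\infty))$ for all $x\ge0$. *)

From HB Require Import structures.
From mathcomp Require Import all_boot all_order all_algebra.
From mathcomp Require Import all_classical all_reals all_analysis.
Set Implicit Arguments. Unset Strict Implicit. Unset Printing Implicit Defensive.
Import Order.TTheory GRing.Theory Num.Theory.
Local Open Scope classical_set_scope.
Local Open Scope ring_scope.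

Definition Mplus (R : realType) (h lambda : R) (mu : probability R R) : Prop :=
  mu `[0, +oo[%classic = 1%E /\
  forall x : R, 0 <= x ->
    (mu `[(x + h)%R, +oo[%classic <= lambda%:E * mu `[x, +oo[%classic)%E.

From HB Require Import structures.
From mathcomp Require Import all_boot all_order all_algebra.
From mathcomp Require Import all_classical all_reals all_analysis.
From mathcomp Require Import measurable_realfun ring lra.
Set Implicit Arguments. Unset Strict Implicit. Unset Printing Implicit Defensive.
Import Order.TTheory GRing.Theory Num.Theory.
Local Open Scope classical_set_scope.
Local Open Scope ring_scope.

(* Put e := (1 - lambda) / 2, so that 2 / (1 - lambda) = e^-1.  Young's
   inequality gives pointwise g^2 <= g(. - h)^2 + e g^2 + e^-1 (g - g(. - h))^2.
   The hypothesis on mu says that translating an upward closed subset of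
   [0, +oo[ by h multiplies its mass by at most lambda; applied to the
   superlevel sets of g^2 through the layer-cake formula this yields
   \int g(x - h)^2 <= lambda \int g^2.  Hence, with I := \int g^2 and
   J := \int (g - g(. - h))^2, we get I <= (lambda + e) I + e^-1 J, i.e.
   e I <= e^-1 J, as soon as I is finite.  Truncating g at level n makes I
   finite without increasing J, and monotone convergence removes the
   truncation. *)

Section upward_closed_sets.
Context {R : realType}.

Definition upward_closed (U : set R) := forall x y, U x -> x <= y -> U y.

Lemma upward_closed_itv (U : set R) : upward_closed U -> U !=set0 ->
  has_lbound U -> exists b, U = [set` Interval (BSide b (inf U)) +oo%O].
Proof.
move=> Uup U0 lbU; have infU : has_inf U by split.
have infU_le x : U x -> inf U <= x by move=> Ux; exact: ge_inf.
have inf_ltU x : inf U < x -> U x.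
  rewrite -subr_gt0 => /inf_adherent/(_ infU)[y Uy].
  by rewrite addrC subrK => /ltW; exact: Uup.
have [Uinf|Uinf] := pselect (U (inf U)); [exists true|exists false];
  apply/seteqP; split => x /=; rewrite in_itv /= andbT.
- exact: infU_le.
- exact: Uup.
- move=> Ux; rewrite lt_neqAle infU_le // andbT.
  by apply/eqP => infx; apply: Uinf; rewrite infx.
- exact: inf_ltU.
Qed.

Lemma preimage_subr_itv_infty (h a : R) (b : bool) :
  (fun x => x - h) @^-1` [set` Interval (BSide b a) +oo%O] =
  [set` Interval (BSide b (a + h)) +oo%O].
Proof.
by apply/seteqP; split => x /=; rewrite !in_itv /= !andbT; case: b;
  rewrite /= ?lerBrDr ?ltrBrDr.
Qed.

End upward_closed_sets.

Section probability_layer_cake.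
Context {R : realType} (mu : probability R R).

Lemma ge0_integral_ccdf (f : R -> R) : measurable_fun setT f ->
  (forall x, 0 <= f x) ->
  (\int[mu]_x (f x)%:E =
   \int[lebesgue_measure]_(r in `[0%R, +oo[) mu (f @^-1` `]r, +oo[))%E.
Proof.
move=> mf f_ge0; pose X : {RV mu >-> R} := mfun_Sub (mem_set mf).
by have := @ge0_expectation_ccdf _ _ _ mu X f_ge0; rewrite expectation_def.
Qed.

Lemma measurable_ccdf (f : R -> R) : measurable_fun setT f ->
  measurable_fun setT (fun r : R => mu (f @^-1` `]r, +oo[%classic)).
Proof.
move=> mf; pose X : {RV mu >-> R} := mfun_Sub (mem_set mf).
exact: (ccdf_measurable X).
Qed.

End probability_layer_cake.

Lemma nondecreasing_ge0 {R : realDomainType} (f : R -> R) :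
  {homo f : x y / x <= y} -> (forall x, x <= 0 -> f x = 0) ->
  forall x, 0 <= f x.
Proof.
move=> f_nd f_le0 x; have [/f_le0->//|/ltW x_ge0] := leP x 0.
by rewrite -(f_le0 0) // f_nd.
Qed.

Lemma measurable_shift {R : realType} (f : R -> R) (h : R) :
  measurable_fun setT f -> measurable_fun setT (fun x : R => f (x - h)).
Proof. by move=> mf; apply: measurableT_comp mf _; exact: measurable_funB. Qed.

Lemma measurable_sqr_sub_shift {R : realType} (f : R -> R) (h : R) :
  measurable_fun setT f ->
  measurable_fun setT (fun x : R => ((f x - f (x - h)) ^+ 2)%:E).
Proof.
move=> mf; apply/measurable_EFinP; apply: measurable_funX.
exact: measurable_funB mf (measurable_shift h mf).
Qed.

Lemma sqr_le_young {R : realFieldType} (e a b : R) : 0 < e ->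
  a ^+ 2 <= b ^+ 2 + e * a ^+ 2 + e^-1 * (a - b) ^+ 2.
Proof.
move=> e_gt0.
have young : 2 * a * (a - b) <= e * a ^+ 2 + e^-1 * (a - b) ^+ 2.
  have : 0 <= e^-1 * (e * a - (a - b)) ^+ 2.
    by rewrite mulr_ge0 ?sqr_ge0 // invr_ge0 ltW.
  suff -> : e^-1 * (e * a - (a - b)) ^+ 2 =
      e * a ^+ 2 - 2 * a * (a - b) + e^-1 * (a - b) ^+ 2 by lra.
  by field; rewrite gt_eqF.
by have := sqr_ge0 (a - b); lra.
Qed.

Lemma integral_sqr_le_young {R : realType} d (T : measurableType d)
    (nu : {measure set T -> \bar R}) (f f' : T -> R) (e : R) :
  measurable_fun setT f -> measurable_fun setT f' -> 0 < e ->
  (\int[nu]_x (f x ^+ 2)%:E <= \int[nu]_x (f' x ^+ 2)%:E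
    + e%:E * \int[nu]_x (f x ^+ 2)%:E + e^-1%:E * \int[nu]_x ((f x - f' x) ^+ 2)%:E)%E.
Proof.
move=> mf mf' e_gt0.
have msqr (u : T -> R) : measurable_fun setT u ->
    measurable_fun setT (fun x => (u x ^+ 2)%:E).
  by move=> mu_m; apply/measurable_EFinP; exact: measurable_funX.
have f2_ge0 x : setT x -> (0 <= (f x ^+ 2)%:E)%E by rewrite lee_fin sqr_ge0.
have f'2_ge0 x : setT x -> (0 <= (f' x ^+ 2)%:E)%E by rewrite lee_fin sqr_ge0.
have df2_ge0 x : setT x -> (0 <= ((f x - f' x) ^+ 2)%:E)%E.
  by rewrite lee_fin sqr_ge0.
have mf2 := msqr _ mf; have mf'2 := msqr _ mf'.
have mdf2 := msqr _ (measurable_funB mf mf').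
have e_ge0 := ltW e_gt0.
have eV_ge0 : 0 <= e^-1 by rewrite invr_ge0.
rewrite -ge0_integralZl_EFin // -ge0_integralZl_EFin //.
rewrite -ge0_integralD //; last 2 first.
- by move=> x _; rewrite mule_ge0 ?lee_fin ?sqr_ge0.
- exact: measurable_funeM.
rewrite -ge0_integralD //; last 4 first.
- by move=> x _; rewrite adde_ge0 ?mule_ge0 ?lee_fin ?sqr_ge0.
- by apply: emeasurable_funD => //; exact: measurable_funeM.
- by move=> x _; rewrite mule_ge0 ?lee_fin ?sqr_ge0.
- exact: measurable_funeM.
apply: ge0_le_integral => //; first by
  apply: emeasurable_funD; [apply: emeasurable_funD|]; try exact: measurable_funeM.
by move=> x _; rewrite -!EFinM -!EFinD lee_fin sqr_le_young.
Qed.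

Lemma fin_num_le_absorb {R : realDomainType} (k : R) (x y : \bar R) :
  x \is a fin_num -> (x <= k%:E * x + y)%E -> ((1 - k)%:E * x <= y)%E.
Proof.
case: x => // r _; case: y => [s| |]; rewrite ?leey // -!EFinM.
by rewrite -EFinD !lee_fin; lra.
Qed.

Section Mplus.
Variables (R : realType) (h lambda : R) (mu : probability R R).
Hypotheses (lambda_ge0 : 0 <= lambda) (lambda_lt1 : lambda < 1).
Hypothesis muM : Mplus h lambda mu.

Lemma Mplus_open_tail x : 0 <= x ->
  (mu `](x + h)%R, +oo[%classic <= lambda%:E * mu `]x, +oo[%classic)%E.
Proof.
move=> x_ge0; have [_ Mtail] := muM.
pose W n := `[x + n.+1%:R^-1 + h, +oo[%classic : set R.
have mW n : measurable (W n) by exact: measurable_itv.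
have ndW : nondecreasing_seq W.
  move=> m n mn; apply/subsetPset => y; rewrite /W /= !in_itv /= !andbT.
  by apply: le_trans; rewrite lerD2r lerD2l lef_pV2 ?posrE // ler_nat.
have tailW : `]x + h, +oo[%classic `<=` \bigcup_n W n.
  move=> y; rewrite /= in_itv /= andbT -ltrBrDr => /ltr_add_invr[n xny].
  by exists n => //; rewrite /W /= in_itv /= andbT -lerBrDr ltW.
apply: (le_trans (le_measure _ _ _ tailW)); rewrite ?inE.
- exact: measurable_itv.
- exact: bigcupT_measurable.
apply: cvge_to_le (nondecreasing_cvg_mu mW (bigcupT_measurable _ mW) ndW) _.
apply: nearW => n /=; apply: le_trans (Mtail _ _) _.
  by rewrite addr_ge0 // invr_ge0.
apply: lee_wpmul2l; first by rewrite lee_fin.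
apply: le_measure; rewrite ?inE; try exact: measurable_itv.
by move=> y; rewrite /= !in_itv /= !andbT; apply: lt_le_trans; rewrite ltrDl.
Qed.

Lemma Mplus_upward_closed (U : set R) : upward_closed U -> U `<=` `[0, +oo[ ->
  (mu ((fun x => x - h)%R @^-1` U) <= lambda%:E * mu U)%E.
Proof.
move=> Uup U_ge0; have [_ Mtail] := muM.
have [->|/set0P U0] := eqVneq U set0.
  by rewrite preimage_set0 measure0 mule_ge0.
have lbU : has_lbound U by exists 0 => x /U_ge0; rewrite /= in_itv /= andbT.
have inf_ge0 : 0 <= inf U.
  by apply: lb_le_inf => // x /U_ge0; rewrite /= in_itv /= andbT.
have [[] UE] := upward_closed_itv Uup U0 lbU; rewrite UE preimage_subr_itv_infty.
- exact: Mtail.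
- exact: Mplus_open_tail.
Qed.

Lemma Mplus_integral_shift (phi : R -> R) : {homo phi : x y / x <= y} ->
  (forall x, x <= 0 -> phi x = 0) ->
  (\int[mu]_x (phi (x - h))%:E <= lambda%:E * \int[mu]_x (phi x)%:E)%E.
Proof.
move=> phi_nd phi_le0; have phi_ge0 := nondecreasing_ge0 phi_nd phi_le0.
have mphi : measurable_fun setT phi := nondecreasing_measurable measurableT phi_nd.
have mphih := measurable_shift h mphi.
rewrite (ge0_integral_ccdf mu mphi phi_ge0) (ge0_integral_ccdf mu mphih) //.
rewrite -ge0_integralZl_EFin //; last exact: measurable_funTS (measurable_ccdf mu mphi).
apply: ge0_le_integral => //.
- exact: measurable_funTS (measurable_ccdf mu mphih).
- by apply: measurable_funeM; exact: measurable_funTS (measurable_ccdf mu mphi).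
move=> r; rewrite /= in_itv /= andbT => r_ge0.
apply: (Mplus_upward_closed (U := phi @^-1` `]r, +oo[)).
- by move=> x y; rewrite /= !in_itv /= !andbT => rx /phi_nd; exact: lt_le_trans.
- move=> x; rewrite /= !in_itv /= !andbT => rx; rewrite leNgt; apply/negP.
  by move=> /ltW/phi_le0 phix; move: rx; rewrite phix ltNge r_ge0.
Qed.

Lemma Mplus_sqr_bounded (G : R -> R) (M : R) : {homo G : x y / x <= y} ->
  (forall x, x <= 0 -> G x = 0) -> (forall x, G x <= M) ->
  (\int[mu]_x (G x ^+ 2)%:E <=
     ((2 / (1 - lambda)) ^+ 2)%:E * \int[mu]_x ((G x - G (x - h)) ^+ 2)%:E)%E.
Proof.
move=> G_nd G_le0 G_le.
set e := (1 - lambda) / 2.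
have e_gt0 : 0 < e by rewrite divr_gt0 // subr_gt0.
have lambda_e : 1 - (lambda + e) = e by rewrite /e; field.
have -> : 2 / (1 - lambda) = e^-1 by rewrite /e invf_div.
clearbody e.
have G_ge0 := nondecreasing_ge0 G_nd G_le0.
have mG : measurable_fun setT G := nondecreasing_measurable measurableT G_nd.
set I := (\int[mu]_x (G x ^+ 2)%:E)%E.
set J := (\int[mu]_x ((G x - G (x - h)) ^+ 2)%:E)%E.
have I_fin : I \is a fin_num.
  rewrite ge0_fin_numE ?integral_ge0 // => [|x _]; last by rewrite lee_fin sqr_ge0.
  apply: (@le_lt_trans _ _ (\int[mu]_x (M ^+ 2)%:E)%E).
    apply: ge0_le_integral => //.
    - by move=> x _; rewrite lee_fin sqr_ge0.
    - by apply/measurable_EFinP; exact: measurable_funX.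
    - by move=> x _; rewrite lee_fin !expr2 ler_pM.
  by rewrite integral_cst // lte_mul_pinfty ?lee_fin ?sqr_ge0 // fin_num_fun_lty.
have shift : (\int[mu]_x (G (x - h) ^+ 2)%:E <= lambda%:E * I)%E.
  apply: (Mplus_integral_shift (phi := fun x => G x ^+ 2)).
  - by move=> x y xy; rewrite !expr2 ler_pM ?G_nd.
  - by move=> x /G_le0 ->; rewrite expr0n.
have := integral_sqr_le_young mu mG (measurable_shift h mG) e_gt0.
rewrite -/I -/J => young.
have : (I <= (lambda + e)%:E * I + e^-1%:E * J)%E.
  apply: le_trans young _; rewrite EFinD muleDl // -addeA -[in leRHS]addeA.
  exact: leeD shift (lexx _).
move=> /(fin_num_le_absorb I_fin); rewrite lambda_e => eI.
apply: (@le_trans _ _ (e^-1%:E * (e%:E * I))%E).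
  by rewrite muleA -EFinM mulVf ?mul1e // lt0r_neq0.
by rewrite expr2 EFinM -muleA; apply: lee_wpmul2l eI; rewrite lee_fin invr_ge0 ltW.
Qed.

End Mplus.

Lemma ler_sqr_sub_min {R : realDomainType} (a b c : R) :
  (Num.min a c - Num.min b c) ^+ 2 <= (a - b) ^+ 2.
Proof.
have [ac|/ltW ca] := leP a c; have [bc|/ltW cb] := leP b c.
- by [].
- by nra.
- by nra.
- by rewrite subrr expr0n sqr_ge0.
Qed.

Lemma cvg_integral_sqr_min {R : realType} d (T : measurableType d)
    (nu : {measure set T -> \bar R}) (f : T -> R) :
  measurable_fun setT f -> (forall x, 0 <= f x) ->
  (\int[nu]_x (Num.min (f x) n%:R ^+ 2)%:E @[n --> \oo] -->
   \int[nu]_x (f x ^+ 2)%:E)%E.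
Proof.
move=> mf f_ge0; pose fn n x := (Num.min (f x) n%:R ^+ 2)%:E.
have mfn n : measurable_fun setT (fn n).
  apply/measurable_EFinP; apply: measurable_funX.
  exact: measurable_minr mf (measurable_cst _).
have fn_ge0 n x : setT x -> (0 <= fn n x)%E by rewrite lee_fin sqr_ge0.
have fn_nd x : setT x -> nondecreasing_seq (fn^~ x).
  move=> _ m n mn; rewrite lee_fin !expr2.
  have min_mn : Num.min (f x) m%:R <= Num.min (f x) n%:R.
    by rewrite le_min !ge_min lexx ler_nat mn orbT.
  by rewrite ler_pM // le_min f_ge0 ler0n.
have fnE x : limn (fn^~ x) = (f x ^+ 2)%:E.
  apply: cvg_lim => //; apply: cvg_near_cst.
  exists (Num.truncn (f x)).+1 => // n /= fxn; rewrite /fn min_l //.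
  by apply: ltW; apply: lt_le_trans (truncnS_gt _) _; rewrite ler_nat.
have <- : (\int[nu]_x limn (fn^~ x) = \int[nu]_x (f x ^+ 2)%:E)%E.
  by apply: eq_integral => x _; exact: fnE.
exact: cvg_monotone_convergence.
Qed.

Theorem lemma2p1 (R : realType) (h lambda : R) (mu : probability R R)
    (g : R -> R) :
  0 < h -> 0 <= lambda -> lambda < 1 ->
  Mplus h lambda mu ->
  (forall x, 0 <= g x) -> {homo g : x y / x <= y} -> g 0 = 0 ->
  (\int[mu]_x (g x ^+ 2)%:E <=
     ((2 / (1 - lambda)) ^+ 2)%:E * \int[mu]_x ((g x - g (x - h)) ^+ 2)%:E)%E.
Proof.
move=> _ lambda_ge0 lambda_lt1 muM g_ge0 g_nd g0.
have g_le0 x : x <= 0 -> g x = 0.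
  by move=> x_le0; apply/le_anti; rewrite g_ge0 andbT -g0 g_nd.
have mg : measurable_fun setT g := nondecreasing_measurable measurableT g_nd.
apply: cvge_to_le (cvg_integral_sqr_min (nu := mu) mg g_ge0) _; apply: nearW => n.
pose G x := Num.min (g x) n%:R.
have G_nd : {homo G : x y / x <= y}.
  by move=> x y xy; rewrite /G le_min !ge_min g_nd // lexx orbT.
have G_le0 x : x <= 0 -> G x = 0 by move=> /g_le0; rewrite /G => ->; rewrite min_l.
have G_le x : G x <= n%:R by rewrite /G ge_min lexx orbT.
apply: le_trans (Mplus_sqr_bounded lambda_ge0 lambda_lt1 muM G_nd G_le0 G_le) _.
apply: lee_wpmul2l; first by rewrite lee_fin sqr_ge0.
apply: ge0_le_integral => //.
- by move=> x _; rewrite lee_fin sqr_ge0.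
- exact: measurable_sqr_sub_shift (nondecreasing_measurable measurableT G_nd).
- exact: measurable_sqr_sub_shift.
- by move=> x _; rewrite lee_fin ler_sqr_sub_min.
Qed.
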